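(* Under the assumptions of the preceding lemma (two homomorphous MDPs with deterministic dynamics $T,T'$, $T'\in(T,\varepsilon_m)$, reward $\lambda_1$-Lipschitz in the action, $T$ and $T'$ $\lambda_2$-inverse Lipschitz in the action), suppose the action gap $\Delta$ satisfies $$\Delta>\frac{(2-\gamma)\lambda_1\lambda_2\varepsilon_m}{1-\gamma}.$$ Then $d^*_T(s)=d^*_{T'}(s)$ for all $s\in\mathcal S$.
   Context: Setting: An MDP has state space $\mathcal S$ (normed), action space $\mathcal A$ with the $\ell_1$ norm, deterministic dynamics $T:\mathcal S\times\mathcal A\to\mathcal S$, bounded reward $r(s,a,s')$, initial distribution $\rho_0$, discount $\gamma\in(0,1)$. $V^*_T(s)=\max_a[r(s,a,T(s,a))+\gamma V^*_T(T(s,a))]$, $Q^*_T(s,a)=r(s,a,T(s,a))+\gamma V^*_T(T(s,a))$, and $\pi^*_T(s)$ is the optimal (deterministic) action. Homomorphous MDPs share $\mathcal S,\mathcal A,r,\rho_0,\gamma$ and satisfy $\{T(s,a):a\in\mathcal A\}=\{T'(s,a):a\in\mathcal A\}$ for every $s$. $T'\in(T,\varepsilon_m)$ means $\|T(s,a)-T'(s,a)\|\le\varepsilon_m$ for all $(s,a)$. Lipschitz: $|r(s,a_1,s')-r(s,a_2,s')|\le\lambda_1\|a_1-a_2\|_1$; inverse Lipschitz: $\|a_1-a_2\|_1\le\lambda_2\|T(s,a_1)-T(s,a_2)\|$ (and likewise for $T'$). The action gap is $\Delta=\min_{\tilde T\in\{T,T'\}}\min_{s\in\mathcal S}\min_{a\neq\pi^*_{\tilde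 T}(s)}\left(V^*_{\tilde T}(s)-Q^*_{\tilde T}(s,a)\right)$. For a policy $\pi$, $d^\pi_T(s)=(1-\gamma)\sum_{t\ge0}\gamma^t p_T(s_t=s\mid\pi)$ is the discounted stationary state distribution under dynamics $T$ starting from $s_0\sim\rho_0$, and $d^*_T:=d^{\pi^*_T}_T$. *)

From HB Require Import structures.
From mathcomp Require Import all_boot all_order all_algebra.
From mathcomp Require Import all_classical all_reals all_analysis.
Set Implicit Arguments. Unset Strict Implicit. Unset Printing Implicit Defensive.
Import Order.TTheory GRing.Theory Num.Theory.
Import numFieldNormedType.Exports.
Local Open Scope classical_set_scope.
Local Open Scope ring_scope.

Section MDP.
Variables (R : realType) (k : nat) (S : normedModType R).

Definition l1norm (a : 'rV[R]_k) : R := \sum_(i < k) `|a ord0 i|.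

Definition borelS := g_sigma_algebraType (@open S).

Definition Qval (gamma : R) (r : S -> 'rV[R]_k -> S -> R)
  (T : S -> 'rV[R]_k -> S) (V : S -> R) (s : S) (a : 'rV[R]_k) : R :=
  r s a (T s a) + gamma * V (T s a).

(* V is V*_T : the bounded solution of the Bellman optimality equation
   V(s) = max_{a in A} [ r(s,a,T(s,a)) + gamma V(T(s,a)) ] (max attained) *)
Definition is_opt_value (A : set 'rV[R]_k) gamma r T (V : S -> R) : Prop :=
  (exists M : R, forall s, `|V s| <= M) /\
  forall s, (exists2 a, A a & V s = Qval gamma r T V s a) /\
            (forall a, A a -> Qval gamma r T V s a <= V s).

Definition is_opt_policy (A : set 'rV[R]_k) gamma r T V (pi : S -> 'rV[R]_k)
  : Prop := forall s, A (pi s) /\ Qval gamma r T V s (pi s) = V s.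

Definition gap_set (A : set 'rV[R]_k) gamma r T V (pi : S -> 'rV[R]_k)
  : set (\bar R) :=
  [set x | exists s a, [/\ A a, a <> pi s & x = (V s - Qval gamma r T V s a)%:E]].

(* action gap Delta over both MDPs (T,V,pi) and (T',V',pi'), as an
   extended-real infimum (the "min" of the paper; +oo if the set is empty) *)
Definition action_gap (A : set 'rV[R]_k) gamma r T V pi T' V' pi' : \bar R :=
  ereal_inf (gap_set A gamma r T V pi `|` gap_set A gamma r T' V' pi').

Definition step (T : S -> 'rV[R]_k -> S) (pi : S -> 'rV[R]_k) (s : S) : S :=
  T s (pi s).

Definition dstat (rho0 : probability (borelS) R) gamma T pi (s : S) : \bar R :=
  (\sum_(t <oo) (((1 - gamma) * gamma ^+ t)%:E *
     rho0 [set s0 : borelS | iter t (step T pi) s0 = s]))%E.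

End MDP.

From HB Require Import structures.
From mathcomp Require Import all_boot all_order all_algebra.
From mathcomp Require Import all_classical all_reals all_analysis.
From mathcomp Require Import ring lra.
Set Implicit Arguments. Unset Strict Implicit. Unset Printing Implicit Defensive.
Import Order.TTheory GRing.Theory Num.Theory.
Import numFieldNormedType.Exports.
Local Open Scope classical_set_scope.
Local Open Scope ring_scope.

(* The discounted stationary distribution d^pi_T only depends
   on the closed-loop transition map s |-> T(s, pi(s)), so it suffices to show
   that the optimal policies of T and T' move every state to the same successor.
   Write c = lambda1 lambda2 eps_m and K = c / (1 - gamma).
   1. Matching: since both MDPs reach the same successor sets, the optimal
      action pi(s) of T is matched by an action b of T' reaching the same
      successor; the Lipschitz assumptions bound the reward loss of b by c, so
      the regret of b in T' is at most V'(s) - V(s) + c + gamma sup|V - V'|.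
   2. Value closeness: regrets are nonnegative, hence sup|V - V'| satisfies
      D <= c + gamma D, i.e. |V - V'| <= K everywhere.
   3. Successors agree: if the two optimal successors differed, the matched
      actions of both MDPs would be suboptimal, each with regret > K + c by the
      gap condition; adding the two bounds of step 1 gives 2K < 2 gamma K, absurd.
   The degenerate case of at most one action is handled directly, and
   otherwise two distinct actions force lambda1, lambda2 >= 0. *)

Lemma l1norm_gt0 (R : realType) (k : nat) (v : 'rV[R]_k) :
  v != 0 -> 0 < l1norm v.
Proof.
move=> v_neq0; rewrite lt_def sumr_ge0 ?andbT => [|i _]; last exact: normr_ge0.
apply: contra v_neq0 => /eqP sum0; apply/eqP/matrixP => i j.
rewrite (ord1 i) mxE; apply/eqP; rewrite -normr_eq0; apply/eqP.
exact: (psumr_eq0P (fun i _ => normr_ge0 _) sum0).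
Qed.

Lemma bounded_contraction (R : realType) (X : Type) (f : X -> R) (c g : R) :
  g < 1 -> (exists M, forall x, f x <= M) ->
  (forall D, (forall x, f x <= D) -> forall x, f x <= c + g * D) ->
  forall x, f x <= c / (1 - g).
Proof.
move=> g_lt1 [M fM] contract x.
have ub : has_ubound (range f) by exists M => _ [y _ <-].
have f_le_sup y : f y <= sup (range f) by apply: ub_le_sup => //; exists y.
have sup_fix : sup (range f) <= c + g * sup (range f).
  apply: ge_sup; first by exists (f x), x.
  by move=> _ [y _ <-]; exact: contract.
apply: le_trans (f_le_sup x) _.
by rewrite ler_pdivlMr ?subr_gt0 //; lra.
Qed.

Lemma action_gap_regret (R : realType) (k : nat) (S : normedModType R)
    (A : set 'rV[R]_k) gamma r (T T' : S -> 'rV[R]_k -> S) V V' pi pi' (x : R) :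
  (x%:E < action_gap A gamma r T V pi T' V' pi')%E ->
  (forall s a, A a -> a <> pi s -> x < V s - Qval gamma r T V s a) /\
  (forall s a, A a -> a <> pi' s -> x < V' s - Qval gamma r T' V' s a).
Proof.
move=> gap; split=> s a Aa a_subopt; rewrite -lte_fin;
  apply: lt_le_trans gap _; apply: ereal_inf_lbound.
- by left; exists s, a.
- by right; exists s, a.
Qed.

Lemma dstat_step (R : realType) (k : nat) (S : normedModType R)
    (rho0 : probability (borelS S) R) gamma (T T' : S -> 'rV[R]_k -> S) pi pi' :
  step T pi = step T' pi' -> dstat rho0 gamma T pi =1 dstat rho0 gamma T' pi'.
Proof. by move=> same_step s; rewrite /dstat same_step. Qed.

Lemma step_single_action (R : realType) (k : nat) (S : normedModType R)
    (A : set 'rV[R]_k) (T T' : S -> 'rV[R]_k -> S) (pi pi' : S -> 'rV[R]_k) :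
  (forall a b, A a -> A b -> a = b) -> (forall s, T s @` A = T' s @` A) ->
  (forall s, A (pi s)) -> (forall s, A (pi' s)) -> step T pi = step T' pi'.
Proof.
move=> single hom Api Api'; apply: funext => s.
have : (T s @` A) (T' s (pi' s)) by rewrite hom; exists (pi' s).
rewrite /step; case=> b Ab <-; by rewrite (single _ _ Ab (Api s)).
Qed.

Lemma lipschitz_consts_ge0 (R : realType) (k : nat) (S : normedModType R)
    (r : S -> 'rV[R]_k -> S -> R) (T : S -> 'rV[R]_k -> S)
    (lambda1 lambda2 : R) (s : S) (a b : 'rV[R]_k) :
  a <> b ->
  `|r s a s - r s b s| <= lambda1 * l1norm (a - b) ->
  l1norm (a - b) <= lambda2 * `|T s a - T s b| ->
  0 <= lambda1 /\ 0 <= lambda2.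
Proof.
move=> a_neq_b r_lip T_inv.
have l1_gt0 : 0 < l1norm (a - b) by apply: l1norm_gt0; rewrite subr_eq0; exact/eqP.
split; first by rewrite -(pmulr_lge0 _ l1_gt0); exact: le_trans r_lip.
rewrite leNgt; apply/negP => lambda2_lt0.
have := mulr_le0_ge0 (ltW lambda2_lt0) (normr_ge0 (T s a - T s b)); lra.
Qed.

Section MatchedAction.
Variables (R : realType) (k : nat) (S : normedModType R).
Variables (A : set 'rV[R]_k) (r : S -> 'rV[R]_k -> S -> R).
Variables (gamma lambda1 lambda2 eps : R) (T1 T2 : S -> 'rV[R]_k -> S).
Variables (V1 V2 : S -> R) (pi1 : S -> 'rV[R]_k).
Hypotheses (gamma_ge0 : 0 <= gamma) (lambda1_ge0 : 0 <= lambda1)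
  (lambda2_ge0 : 0 <= lambda2).
Hypothesis r_lip : forall s a1 a2 s', A a1 -> A a2 ->
  `|r s a1 s' - r s a2 s'| <= lambda1 * l1norm (a1 - a2).
Hypothesis T1_inv : forall s a1 a2, A a1 -> A a2 ->
  l1norm (a1 - a2) <= lambda2 * `|T1 s a1 - T1 s a2|.
Hypothesis T2_close : forall s a, A a -> `|T2 s a - T1 s a| <= eps.
Hypothesis reach : forall s, T1 s @` A `<=` T2 s @` A.
Hypothesis pi1_opt : is_opt_policy A gamma r T1 V1 pi1.

Lemma reward_shift s a b : A a -> A b -> T2 s b = T1 s a ->
  r s a (T1 s a) - r s b (T1 s a) <= lambda1 * lambda2 * eps.
Proof.
move=> Aa Ab same_succ.
apply: le_trans (ler_norm _) _; apply: le_trans (@r_lip _ _ _ _ Aa Ab) _.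
rewrite -mulrA; apply: ler_wpM2l => //; apply: le_trans (@T1_inv s _ _ Aa Ab) _.
by apply: ler_wpM2l => //; rewrite -same_succ; exact: T2_close.
Qed.

Lemma matched_action_regret (D : R) : (forall z, V1 z - V2 z <= D) ->
  forall s, exists b, [/\ A b, T2 s b = T1 s (pi1 s) &
    V2 s - Qval gamma r T2 V2 s b <=
      V2 s - V1 s + lambda1 * lambda2 * eps + gamma * D].
Proof.
move=> D_ub s; have [A_pi1 V1_eq] := pi1_opt s.
have [b Ab same_succ] := @reach s _ (imageP (T1 s) A_pi1).
exists b; split=> //.
have := reward_shift A_pi1 Ab same_succ.
have := ler_wpM2l gamma_ge0 (D_ub (T1 s (pi1 s))).
by rewrite -V1_eq /Qval same_succ; lra.
Qed.

End MatchedAction.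

Section TwoMDPs.
Variables (R : realType) (k : nat) (S : normedModType R).
Variables (A : set 'rV[R]_k) (r : S -> 'rV[R]_k -> S -> R).
Variables (gamma lambda1 lambda2 eps : R) (T T' : S -> 'rV[R]_k -> S).
Variables (V V' : S -> R) (pi pi' : S -> 'rV[R]_k).
Hypotheses (gamma_ge0 : 0 <= gamma) (gamma_lt1 : gamma < 1)
  (lambda1_ge0 : 0 <= lambda1) (lambda2_ge0 : 0 <= lambda2).
Hypothesis r_lip : forall s a1 a2 s', A a1 -> A a2 ->
  `|r s a1 s' - r s a2 s'| <= lambda1 * l1norm (a1 - a2).
Hypothesis hom : forall s, T s @` A = T' s @` A.
Hypothesis close : forall s a, A a -> `|T s a - T' s a| <= eps.
Hypothesis T_inv : forall s a1 a2, A a1 -> A a2 ->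
  l1norm (a1 - a2) <= lambda2 * `|T s a1 - T s a2|.
Hypothesis T'_inv : forall s a1 a2, A a1 -> A a2 ->
  l1norm (a1 - a2) <= lambda2 * `|T' s a1 - T' s a2|.
Hypotheses (V_opt : is_opt_value A gamma r T V) (pi_opt : is_opt_policy A gamma r T V pi).
Hypotheses (V'_opt : is_opt_value A gamma r T' V') (pi'_opt : is_opt_policy A gamma r T' V' pi').

Let c := lambda1 * lambda2 * eps.
Let K := c / (1 - gamma).

Let close' s a : A a -> `|T' s a - T s a| <= eps.
Proof. by move=> Aa; rewrite distrC; exact: close. Qed.
Let reach s : T s @` A `<=` T' s @` A.
Proof. by rewrite hom. Qed.
Let reach' s : T' s @` A `<=` T s @` A.
Proof. by rewrite hom. Qed.

Let regret_ge0 (T1 : S -> 'rV[R]_k -> S) V1 s a :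
  is_opt_value A gamma r T1 V1 -> A a -> 0 <= V1 s - Qval gamma r T1 V1 s a.
Proof. by move=> [_ opt] Aa; rewrite subr_ge0; exact: (opt s).2. Qed.

Lemma opt_values_close z : `|V z - V' z| <= K.
Proof.
apply: (bounded_contraction gamma_lt1 (f := fun z => `|V z - V' z|)).
  have [[M VM] _] := V_opt; have [[M' V'M] _] := V'_opt.
  by exists (M + M') => y; apply: le_trans (ler_normB _ _) _; exact: lerD.
move=> D D_ub s; rewrite ler_norml.
have le_D y : V y - V' y <= D by apply: le_trans (ler_norm _) (D_ub y).
have le_D' y : V' y - V y <= D.
  by apply: le_trans (ler_norm _) _; rewrite distrC; exact: D_ub.
have [b [Ab _ regret]] :=
  matched_action_regret gamma_ge0 lambda1_ge0 lambda2_ge0 r_lip T_inv close' reach pi_opt le_D s.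
have [b' [Ab' _ regret']] :=
  matched_action_regret gamma_ge0 lambda1_ge0 lambda2_ge0 r_lip T'_inv close reach' pi'_opt le_D' s.
have := regret_ge0 s V'_opt Ab; have := regret_ge0 s V_opt Ab'.
by rewrite /c; lra.
Qed.

Lemma optimal_successors_agree :
  ((K + c)%:E < action_gap A gamma r T V pi T' V' pi')%E ->
  step T pi = step T' pi'.
Proof.
move=> gap; have [gapT gapT'] := action_gap_regret gap.
have le_K z : V z - V' z <= K by apply: le_trans (ler_norm _) (opt_values_close z).
have le_K' z : V' z - V z <= K.
  by apply: le_trans (ler_norm _) _; rewrite distrC; exact: opt_values_close.
have K_ge0 : 0 <= K := le_trans (normr_ge0 _) (opt_values_close 0).
apply: funext => s; rewrite /step.
apply: contrapT => succ_neq.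
have [b [Ab b_succ regret_b]] :=
  matched_action_regret gamma_ge0 lambda1_ge0 lambda2_ge0 r_lip T_inv close' reach pi_opt le_K s.
have [a [Aa a_succ regret_a]] :=
  matched_action_regret gamma_ge0 lambda1_ge0 lambda2_ge0 r_lip T'_inv close reach' pi'_opt le_K' s.
have b_subopt : b <> pi' s by move=> b_eq; apply: succ_neq; rewrite -b_succ b_eq.
have a_subopt : a <> pi s by move=> a_eq; apply: succ_neq; rewrite -a_succ a_eq.
have := gapT s a Aa a_subopt; have := gapT' s b Ab b_subopt.
have := ler_wpM2r K_ge0 (ltW gamma_lt1).
by rewrite mul1r /c; lra.
Qed.

End TwoMDPs.

Theorem mainTheorem2 (R : realType) (k : nat) (S : normedModType R)
  (A : set 'rV[R]_k) (r : S -> 'rV[R]_k -> S -> R)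
  (rho0 : probability (borelS S) R) (gamma : R)
  (T T' : S -> 'rV[R]_k -> S) (eps_m lambda1 lambda2 : R)
  (V V' : S -> R) (pi pi' : S -> 'rV[R]_k) :
  0 < gamma < 1 ->
  (exists M : R, forall s a s', `|r s a s'| <= M) ->
  (* homomorphous *)
  (forall s, T s @` A = T' s @` A) ->
  (* T' in (T, eps_m) *)
  (forall s a, A a -> `|T s a - T' s a| <= eps_m) ->
  (* reward lambda1-Lipschitz in the action *)
  (forall s a1 a2 s', A a1 -> A a2 ->
     `|r s a1 s' - r s a2 s'| <= lambda1 * l1norm (a1 - a2)) ->
  (* T and T' lambda2-inverse Lipschitz in the action *)
  (forall s a1 a2, A a1 -> A a2 ->
     l1norm (a1 - a2) <= lambda2 * `|T s a1 - T s a2|) ->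
  (forall s a1 a2, A a1 -> A a2 ->
     l1norm (a1 - a2) <= lambda2 * `|T' s a1 - T' s a2|) ->
  (* optimal values and optimal policies *)
  is_opt_value A gamma r T V -> is_opt_policy A gamma r T V pi ->
  is_opt_value A gamma r T' V' -> is_opt_policy A gamma r T' V' pi' ->
  (* action gap condition *)
  (((2 - gamma) * lambda1 * lambda2 * eps_m / (1 - gamma))%:E
     < action_gap A gamma r T V pi T' V' pi')%E ->
  forall s : S, dstat rho0 gamma T pi s = dstat rho0 gamma T' pi' s.
Proof.
move=> /andP[gamma_gt0 gamma_lt1] _ hom close r_lip T_inv T'_inv
  V_opt pi_opt V'_opt pi'_opt gap.
apply: dstat_step.
have [[a [b [Aa Ab a_neq_b]]] | no_two] :=
  pselect (exists a b, [/\ A a, A b & a <> b]); last first.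
  apply: step_single_action hom (fun s => (pi_opt s).1) (fun s => (pi'_opt s).1).
  by move=> a b Aa Ab; apply: contrapT => a_neq_b; apply: no_two; exists a, b.
have [lambda1_ge0 lambda2_ge0] :=
  lipschitz_consts_ge0 (s := 0) a_neq_b (r_lip 0 a b 0 Aa Ab) (T_inv 0 a b Aa Ab).
have threshold : (2 - gamma) * lambda1 * lambda2 * eps_m / (1 - gamma) =
  lambda1 * lambda2 * eps_m / (1 - gamma) + lambda1 * lambda2 * eps_m.
  by field; lra.
rewrite threshold in gap.
exact: (optimal_successors_agree (ltW gamma_gt0) gamma_lt1 lambda1_ge0 lambda2_ge0
  r_lip hom close T_inv T'_inv V_opt pi_opt V'_opt pi'_opt gap).
Qed.
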